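(* Consecutive reflection points of $\mathrm{OPT}$ (in its orientation) alternate between left reflection points and right reflection points.
   Context: Instance: vertical line segments $s_1,\dots,s_n$ in $\mathbb{R}^2$, each of length $1$, with pairwise distinct $x$-coordinates. A tour is a cyclic sequence of points $p_1,\dots,p_\sigma$, each on some segment, with every segment containing at least one $p_j$; the straight segments joining consecutive points are legs. $\mathrm{OPT}$ is a fixed minimum-cost tour, oriented, with no two consecutive points on the same segment (no vertical legs) and not self-crossing. A point $p_j$ of $\mathrm{OPT}$ on segment $s$ is a left (resp. right) reflection point if both incident legs lie in $x\le x(s)$ (resp. $x\ge x(s)$). *)

From Stdlib Require Import Reals List Arith Lra.
Open Scope R_scope.

Definition point := (R * R)%type.

Definition on_seg (sx sy : nat -> R) (i : nat) (p : point) : Prop :=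
  fst p = sx i /\ sy i <= snd p <= sy i + 1.

Definition distinct_x (n : nat) (sx : nat -> R) : Prop :=
  forall i j, (i < n)%nat -> (j < n)%nat -> i <> j -> sx i <> sx j.

Definition pt (T : list point) (j : nat) : point :=
  nth (j mod length T) T (0, 0).

Definition is_tour (n : nat) (sx sy : nat -> R) (T : list point) : Prop :=
  T <> nil /\
  (forall p, In p T -> exists i, (i < n)%nat /\ on_seg sx sy i p) /\
  (forall i, (i < n)%nat -> exists p, In p T /\ on_seg sx sy i p).

Definition dist (p q : point) : R :=
  sqrt ((fst p - fst q) ^ 2 + (snd p - snd q) ^ 2).

Definition cost (T : list point) : R :=
  fold_right Rplus 0 (map (fun j => dist (pt T j) (pt T (S j))) (seq 0 (length T))).

Definition no_consec_same_seg (n : nat) (sx sy : nat -> R) (T : list point) : Prop :=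
  forall j i, (j < length T)%nat -> (i < n)%nat ->
    ~ (on_seg sx sy i (pt T j) /\ on_seg sx sy i (pt T (S j))).

Definition orient (a b c : point) : R :=
  (fst b - fst a) * (snd c - snd a) - (snd b - snd a) * (fst c - fst a).

Definition proper_cross (a b c d : point) : Prop :=
  orient a b c * orient a b d < 0 /\ orient c d a * orient c d b < 0.

Definition not_self_crossing (T : list point) : Prop :=
  forall j k, (j < length T)%nat -> (k < length T)%nat -> j <> k ->
    ~ proper_cross (pt T j) (pt T (S j)) (pt T k) (pt T (S k)).

Definition min_cost_tour (n : nat) (sx sy : nat -> R) (T : list point) : Prop :=
  is_tour n sx sy T /\ forall T', is_tour n sx sy T' -> cost T <= cost T'.

(* p_j on segment s is a left reflection point if both incident legs
   (p_{j-1} p_j and p_j p_{j+1}) lie in x <= x(s); right: x >= x(s).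
   p_{j-1} is pt T (j + length T - 1). *)
Definition left_refl (n : nat) (sx sy : nat -> R) (T : list point) (j : nat) : Prop :=
  exists i, (i < n)%nat /\ on_seg sx sy i (pt T j) /\
    fst (pt T (j + length T - 1)) <= sx i /\ fst (pt T j) <= sx i /\
    fst (pt T (S j)) <= sx i.

Definition right_refl (n : nat) (sx sy : nat -> R) (T : list point) (j : nat) : Prop :=
  exists i, (i < n)%nat /\ on_seg sx sy i (pt T j) /\
    sx i <= fst (pt T (j + length T - 1)) /\ sx i <= fst (pt T j) /\
    sx i <= fst (pt T (S j)).

Definition refl (n : nat) (sx sy : nat -> R) (T : list point) (j : nat) : Prop :=
  left_refl n sx sy T j \/ right_refl n sx sy T j.

From Stdlib Require Import Reals List Arith.
From Stdlib Require Import Lia Lra.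
Open Scope R_scope.

(* Since no leg is vertical, the x-coordinate changes at every step of the
   tour, and a reflection point is exactly a local maximum (left) or local
   minimum (right) of the x-coordinate along the tour.  Leaving a left
   reflection point the x-coordinate decreases, and it keeps decreasing until
   it reaches a local minimum; so the next reflection point cannot be a local
   maximum, i.e. it is a right reflection point.  Symmetrically for right
   reflection points. *)

(* [k - 1] is truncated: both notions are only used at indices [k >= 1]. *)
Definition local_max (x : nat -> R) (k : nat) : Prop :=
  x (k - 1)%nat <= x k /\ x (S k) <= x k.

Definition local_min (x : nat -> R) (k : nat) : Prop :=
  x k <= x (k - 1)%nat /\ x k <= x (S k).

Lemma local_min_opp (x : nat -> R) (k : nat) :
  local_min x k <-> local_max (fun i => - x i) k.
Proof. unfold local_min, local_max; split; intros []; split; lra. Qed.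

Lemma local_max_opp (x : nat -> R) (k : nat) :
  local_max x k <-> local_min (fun i => - x i) k.
Proof. unfold local_min, local_max; split; intros []; split; lra. Qed.

Lemma descent_until_local_min (x : nat -> R) (j d : nat) :
  x (S j) < x j -> (0 < d)%nat ->
  (forall e, (0 < e < d)%nat -> ~ local_min x (j + e)) ->
  x (j + d)%nat < x (j + d - 1)%nat.
Proof.
  intros Hj. induction d as [|d IH]; intros Hd Hno; [lia|].
  destruct (Nat.eq_dec d 0) as [->|Hd0].
  - replace (j + 1)%nat with (S j) by lia.
    replace (S j - 1)%nat with j by lia. exact Hj.
  - assert (Hdesc : x (j + d)%nat < x (j + d - 1)%nat).
    { apply IH; [lia|]. intros e He. apply Hno. lia. }
    replace (j + S d)%nat with (S (j + d)) by lia.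
    replace (S (j + d) - 1)%nat with (j + d)%nat by lia.
    destruct (Rlt_or_le (x (S (j + d))) (x (j + d)%nat)) as [Hlt|Hle]; [exact Hlt|].
    exfalso. apply (Hno d); [lia|]. split; lra.
Qed.

Lemma next_extremum_after_descent (x : nat -> R) (j d : nat) :
  x (S j) < x j -> (0 < d)%nat ->
  (forall e, (0 < e < d)%nat -> ~ local_min x (j + e)) ->
  local_max x (j + d) \/ local_min x (j + d) -> local_min x (j + d).
Proof.
  intros Hj Hd Hno [[Hmax _]|Hmin]; [|exact Hmin].
  pose proof (descent_until_local_min x j d Hj Hd Hno). lra.
Qed.

Lemma next_extremum_after_ascent (x : nat -> R) (j d : nat) :
  x j < x (S j) -> (0 < d)%nat ->
  (forall e, (0 < e < d)%nat -> ~ local_max x (j + e)) ->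
  local_max x (j + d) \/ local_min x (j + d) -> local_max x (j + d).
Proof.
  intros Hj Hd Hno Hext. apply local_max_opp.
  apply next_extremum_after_descent; [lra|exact Hd| |].
  - intros e He Hmin. apply (Hno e He). now apply local_max_opp.
  - destruct Hext as [Hmax|Hmin]; [right|left].
    + now apply local_max_opp.
    + now apply local_min_opp.
Qed.

Definition xcoord (T : list point) (k : nat) : R := fst (pt T k).

Lemma pt_mod (T : list point) (k : nat) : pt T (k mod length T) = pt T k.
Proof. unfold pt. now rewrite Nat.Div0.mod_mod. Qed.

Lemma pt_succ_mod (T : list point) (k : nat) : pt T (S (k mod length T)) = pt T (S k).
Proof.
  unfold pt. f_equal.
  replace (S (k mod length T)) with (1 + k mod length T)%nat by lia.
  now rewrite Nat.Div0.add_mod_idemp_r.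
Qed.

Lemma xcoord_pred (T : list point) (k : nat) :
  (0 < k)%nat -> xcoord T (k + length T - 1) = xcoord T (k - 1).
Proof.
  intros Hk. unfold xcoord, pt.
  replace (k + length T - 1)%nat with (k - 1 + 1 * length T)%nat by lia.
  now rewrite Nat.Div0.mod_add.
Qed.

Lemma left_refl_succ_le (n : nat) (sx sy : nat -> R) (T : list point) (k : nat) :
  left_refl n sx sy T k -> xcoord T (S k) <= xcoord T k.
Proof. intros (i & _ & [Hx _] & _ & _ & H). unfold xcoord. lra. Qed.

Lemma right_refl_le_succ (n : nat) (sx sy : nat -> R) (T : list point) (k : nat) :
  right_refl n sx sy T k -> xcoord T k <= xcoord T (S k).
Proof. intros (i & _ & [Hx _] & _ & _ & H). unfold xcoord. lra. Qed.

Section Tour.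

Variables (n : nat) (sx sy : nat -> R) (T : list point).
Hypothesis tour : is_tour n sx sy T.

Lemma tour_length_pos : length T <> 0%nat.
Proof. destruct tour as [Hne _]. destruct T; simpl; [congruence|lia]. Qed.

Lemma pt_on_some_seg (k : nat) : exists i, (i < n)%nat /\ on_seg sx sy i (pt T k).
Proof.
  destruct tour as (_ & Hin & _). apply Hin, nth_In, Nat.mod_upper_bound.
  exact tour_length_pos.
Qed.

Lemma left_refl_iff_local_max (k : nat) :
  (0 < k)%nat -> left_refl n sx sy T k <-> local_max (xcoord T) k.
Proof.
  intros Hk. unfold left_refl, local_max. rewrite <- xcoord_pred by exact Hk.
  split.
  - intros (i & _ & [Hx _] & H1 & _ & H3). unfold xcoord. rewrite Hx. lra.
  - intros [H1 H3]. destruct (pt_on_some_seg k) as (i & Hi & Hon).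
    exists i. split; [exact Hi|]. split; [exact Hon|].
    destruct Hon as [Hx _]. unfold xcoord in *. rewrite Hx in *. lra.
Qed.

Lemma right_refl_iff_local_min (k : nat) :
  (0 < k)%nat -> right_refl n sx sy T k <-> local_min (xcoord T) k.
Proof.
  intros Hk. unfold right_refl, local_min. rewrite <- xcoord_pred by exact Hk.
  split.
  - intros (i & _ & [Hx _] & H1 & _ & H3). unfold xcoord. rewrite Hx. lra.
  - intros [H1 H3]. destruct (pt_on_some_seg k) as (i & Hi & Hon).
    exists i. split; [exact Hi|]. split; [exact Hon|].
    destruct Hon as [Hx _]. unfold xcoord in *. rewrite Hx in *. lra.
Qed.

Lemma refl_local_extremum (k : nat) :
  (0 < k)%nat -> refl n sx sy T k ->
  local_max (xcoord T) k \/ local_min (xcoord T) k.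
Proof.
  intros Hk [Hl|Hr]; [left|right].
  - now apply left_refl_iff_local_max.
  - now apply right_refl_iff_local_min.
Qed.

Lemma xcoord_succ_neq (k : nat) :
  distinct_x n sx -> no_consec_same_seg n sx sy T ->
  xcoord T k <> xcoord T (S k).
Proof.
  intros Hdx Hnc Heq.
  destruct (pt_on_some_seg k) as (i & Hi & Hon).
  destruct (pt_on_some_seg (S k)) as (i' & Hi' & Hon').
  assert (i = i') as <-.
  { destruct (Nat.eq_dec i i') as [|Hne]; [assumption|].
    exfalso. apply (Hdx i i' Hi Hi' Hne).
    destruct Hon as [Hx _], Hon' as [Hx' _]. unfold xcoord in Heq. congruence. }
  apply (Hnc (k mod length T)%nat i); [|exact Hi|].
  - exact (Nat.mod_upper_bound _ _ tour_length_pos).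
  - rewrite pt_mod, pt_succ_mod. auto.
Qed.

End Tour.

Theorem corollary1 (n : nat) (sx sy : nat -> R) (OPT : list point) :
  distinct_x n sx ->
  min_cost_tour n sx sy OPT ->
  no_consec_same_seg n sx sy OPT ->
  not_self_crossing OPT ->
  forall j d, (j < length OPT)%nat -> (0 < d)%nat -> (d < length OPT)%nat ->
    refl n sx sy OPT j -> refl n sx sy OPT (j + d) ->
    (forall e, (0 < e)%nat -> (e < d)%nat -> ~ refl n sx sy OPT (j + e)) ->
    (left_refl n sx sy OPT j -> right_refl n sx sy OPT (j + d)) /\
    (right_refl n sx sy OPT j -> left_refl n sx sy OPT (j + d)).
Proof.
  intros Hdx [Htour _] Hnc _ j d _ Hd _ _ Hrefl Hno.
  pose proof (xcoord_succ_neq n sx sy OPT Htour j Hdx Hnc) as Hstep.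
  pose proof (refl_local_extremum n sx sy OPT Htour (j + d) ltac:(lia) Hrefl) as Hext.
  split; intros Hj.
  - apply right_refl_iff_local_min; [exact Htour|lia|].
    apply next_extremum_after_descent; [|exact Hd| |exact Hext].
    + pose proof (left_refl_succ_le n sx sy OPT j Hj). lra.
    + intros e He Hmin. apply (Hno e); [lia|lia|]. right.
      apply right_refl_iff_local_min; [exact Htour|lia|exact Hmin].
  - apply left_refl_iff_local_max; [exact Htour|lia|].
    apply next_extremum_after_ascent; [|exact Hd| |exact Hext].
    + pose proof (right_refl_le_succ n sx sy OPT j Hj). lra.
    + intros e He Hmax. apply (Hno e); [lia|lia|]. left.
      apply left_refl_iff_local_max; [exact Htour|lia|exact Hmax].
Qed.
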